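(* Let $f\colon G\to G$ be a graph map with mapping torus $X$, and let $H$, $z$, $\widetilde P$ be as in the context. Let $\mathcal V_1,\dots,\mathcal V_m$ be the connected components of the union $\mathcal V$ of the vertical edges of $X$, and let $c_i\in H$ be the homology class of the unique embedded directed cycle in $\mathcal V_i$. Then $\det(I-z^{-1}\widetilde P)\doteq\prod_{i=1}^m(1-c_i)$.
   Context: $G$ is a finite connected graph; a graph map sends vertices to vertices and edges to nondegenerate edge paths. $X=G\times[0,1]/(x,1)\sim(f(x),0)$ is the mapping torus; its vertical edges are the arcs $\{v\}\times[0,1]$ for vertices $v$ of $G$, oriented from $v$ to $f(v)$; each component of their union consists of one directed cycle (a periodic orbit of $f$ on vertices) with trees attached. $H=H_1(X;\mathbb{Z})/\mathrm{torsion}$, $\widetilde X\to X$ is the universal free abelian cover with deck group $H$, $\widetilde G_0$ is a fixed component of the preimage of $G$ with stabilizer $K$, $\widetilde f\colon\widetilde G_0\to\widetilde G_0$ is a fixed lift of $f$, and $z\in H$ is the deck transformation such that for each $\widetilde x\in\widetilde G_0$ over $x$, $\widetilde f(\widetilde x)$ is the first point of $\widetilde G_0$ on the lift starting at $z\widetilde x$ of the arc $\{x\}\times[0,1]$. With a chosen lift of each vertex, $C_0(\widetilde G_0)\cong\mathbb{Z}[K]^V$ and $\widetilde P$ is the $\mathbb{Z}[K]$-matrix of $\widetilde f$ on $0$-chains. $\doteq$ means equality in $\mathbb{Z}[H]$ up to a unit $\pm h$, $h\in H$. *)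

From HB Require Import structures.
From mathcomp Require Import all_boot all_algebra finmap.
From mathcomp Require Import monalg.
Set Implicit Arguments. Unset Strict Implicit. Unset Printing Implicit Defensive.
Import GRing.Theory.
Local Open Scope fset.
Local Open Scope ring_scope.

Definition grpalg (K : zmodType) : predArgType := malg K int.
HB.instance Definition _ (K : zmodType) := GRing.Zmodule.on (grpalg K).

Section GrpAlg.
Context (K : zmodType).
Local Notation R := (grpalg K).
Implicit Types (g : R) (k : K).

Definition gone : R := << (0 : K) >>.
Definition gmul g1 g2 : R :=
  \sum_(k1 <- msupp g1) \sum_(k2 <- msupp g2) << g1@_k1 * g2@_k2 *g (k1 + k2) >>.

Lemma gmullw (d1 d2 : {fset K}) g1 g2 :
  msupp g1 `<=` d1 -> msupp g2 `<=` d2 ->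
  gmul g1 g2 = \sum_(k1 <- d1) \sum_(k2 <- d2) << g1@_k1 * g2@_k2 *g (k1 + k2) >>.
Proof.
move=> le_d1 le_d2; rewrite /gmul (big_fset_incl _ le_d1) /=.
  apply/eq_bigr=> k1 _; apply/big_fset_incl => // k _ /mcoeff_outdom ->.
  by rewrite mulr0 monalgU0.
move=> k _ /mcoeff_outdom g1k.
by rewrite big1 => // k' _; rewrite g1k mul0r monalgU0.
Qed.

Lemma gmul0g : left_zero 0 gmul.
Proof. by move=> g; rewrite /gmul msupp0 big_seq_fset0. Qed.
Lemma gmulg0 : right_zero 0 gmul.
Proof. by move=> g; rewrite /gmul exchange_big msupp0 big_seq_fset0. Qed.

Lemma gmulUg c k g :
  gmul << c *g k >> g = \sum_(k' <- msupp g) << c * g@_k' *g (k + k') >>.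
Proof.
rewrite (gmullw msuppU_le (fsubset_refl _)) big_seq_fset1.
by apply/eq_bigr => k' _; rewrite mcoeffUU.
Qed.

Lemma gmulgU c k g :
  gmul g << c *g k >> = \sum_(k' <- msupp g) << g@_k' * c *g (k' + k) >>.
Proof.
rewrite (gmullw (fsubset_refl _) msuppU_le).
by apply/eq_bigr=> k' _; rewrite big_seq_fset1 mcoeffUU.
Qed.

Lemma gmulUU c1 c2 k1 k2 :
  gmul << c1 *g k1 >> << c2 *g k2 >> = << c1 * c2 *g (k1 + k2) >>.
Proof. by rewrite (gmullw msuppU_le msuppU_le) !big_seq_fset1 !mcoeffUU. Qed.

Lemma gmulEl1 g1 g2 :
  gmul g1 g2 = \sum_(k1 <- msupp g1) gmul << g1@_k1 *g k1 >> g2.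
Proof. by apply/eq_bigr=> k _; rewrite gmulUg. Qed.

Lemma gmulEr1 g1 g2 :
  gmul g1 g2 = \sum_(k2 <- msupp g2) gmul g1 << g2@_k2 *g k2 >>.
Proof.
by rewrite {1}/gmul exchange_big /=; apply/eq_bigr=> k _; rewrite gmulgU.
Qed.

Lemma gmul1g : left_id gone gmul.
Proof.
move=> g; rewrite gmulUg [RHS]monalgE.
by apply/eq_bigr=> kg _; rewrite mul1r add0r.
Qed.

Lemma gmulg1 : right_id gone gmul.
Proof.
move=> g; rewrite gmulgU [RHS]monalgE.
by apply/eq_bigr=> k _; rewrite mulr1 addr0.
Qed.

Lemma gmulgDl : left_distributive gmul +%R.
Proof.
move=> g1 g2 g.
rewrite [in RHS](gmullw (fsubsetUl _ (msupp g2)) (fsubset_refl (msupp g))).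
rewrite [in RHS](gmullw (fsubsetUr (msupp g1) _) (fsubset_refl (msupp g))).
rewrite (gmullw (msuppD_le _ _) (fsubset_refl _)).
rewrite -big_split /=; apply/eq_bigr=> k1 _.
rewrite -big_split /=; apply/eq_bigr=> k2 _.
by rewrite mcoeffD mulrDl monalgUD.
Qed.

Lemma gmulgDr : right_distributive gmul +%R.
Proof.
move=> g g1 g2.
rewrite [in RHS](gmullw (fsubset_refl (msupp g)) (fsubsetUl _ (msupp g2))).
rewrite [in RHS](gmullw (fsubset_refl (msupp g)) (fsubsetUr (msupp g1) _)).
rewrite (gmullw (fsubset_refl _) (msuppD_le _ _)).
rewrite -big_split /=; apply/eq_bigr => k1 _.
rewrite -big_split /=; apply/eq_bigr => k2 _.
by rewrite mcoeffD mulrDr monalgUD.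
Qed.

Lemma gmulA : associative gmul.
Proof.
move=> g1 g2 g3.
rewrite [RHS](big_morph (gmul^~ _) (fun _ _ => gmulgDl _ _ _) (gmul0g _)).
rewrite gmulEl1; apply/eq_bigr=> k1 _.
rewrite [LHS](big_morph (gmul _) (fun _ _ => gmulgDr _ _ _) (gmulg0 _)).
rewrite [RHS](big_morph (gmul^~ _) (fun _ _ => gmulgDl _ _ _) (gmul0g _)).
apply/eq_bigr=> k2 _.
rewrite [LHS](big_morph (gmul _) (fun _ _ => gmulgDr _ _ _) (gmulg0 _)).
by rewrite gmulEr1; apply/eq_bigr=> k3 _; rewrite !gmulUU mulrA addrA.
Qed.

Lemma gone_neq0 : gone != 0.
Proof. by rewrite monalgU_eq0 oner_eq0. Qed.

Lemma gmulC : commutative gmul.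
Proof.
move=> g1 g2; rewrite /gmul exchange_big /=; apply/eq_bigr=> k1 _.
by apply/eq_bigr=> k2 _; rewrite mulrC addrC.
Qed.

HB.instance Definition _ := GRing.Zmodule_isComNzRing.Build R
  gmulA gmulC gmul1g gmulgDl gone_neq0.
End GrpAlg.


Section MappingTorus.
Variables (V E : finType) (src tgt : E -> V).

Definition oedge := (E * bool)%type.
Definition osrc (x : oedge) : V := if x.2 then src x.1 else tgt x.1.
Definition otgt (x : oedge) : V := if x.2 then tgt x.1 else src x.1.

Fixpoint gpath (u : V) (p : seq oedge) (w : V) : bool :=
  match p with
  | [::] => u == w
  | x :: q => (osrc x == u) && gpath (otgt x) q w
  end.

Definition graph_connected : Prop := forall u w : V, exists p, gpath u p w.

Variables (fV : V -> V) (fE : E -> seq oedge).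

Definition is_graph_map : Prop :=
  forall e : E, fE e != [::] /\ gpath (fV (src e)) (fE e) (fV (tgt e)).

(* 1-cells of X: the edges of G (inl e) and the vertical edges (inr v),   *)
(* the vertical edge of v going from v to fV v.                            *)
Definition cell1 := (E + V)%type.
Definition c1src (s : cell1) : V := match s with inl e => src e | inr v => v end.
Definition c1tgt (s : cell1) : V := match s with inl e => tgt e | inr v => fV v end.

Definition chain := {ffun cell1 -> int}.
Definition delta (s : cell1) : chain := [ffun s' => (s' == s)%:Z].
Definition pchain (p : seq oedge) : chain :=
  \sum_(x <- p) (if x.2 then delta (inl x.1) else - delta (inl x.1)).
Definition bd1 (c : chain) (v : V) : int :=
  \sum_(s : cell1) c s * ((c1tgt s == v)%:Z - (c1src s == v)%:Z).
Definition is_cycle (c : chain) : Prop := forall v, bd1 c v = 0.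

(* boundary of the 2-cell e x [0,1] of X: e, vert(tgt e), f(e)^-1, vert(src e)^-1 *)
Definition bd2 (e : E) : chain :=
  delta (inl e) + delta (inr (tgt e)) - pchain (fE e) - delta (inr (src e)).

Definition ncell1 := #|{: cell1}|.
Definition chainQ (c : chain) : 'rV[rat]_ncell1 := \row_i ((c (enum_val i))%:~R).
Definition B2 : 'M[rat]_(#|{: E}|, ncell1) := \matrix_(i, j) ((bd2 (enum_val i) (enum_val j))%:~R).

(* H = H_1(X;Z)/torsion, realized injectively inside the Q-vector space    *)
(* 'rV[rat]_ncell1: the class of an integral cycle c is c *m cokermx B2,   *)
(* whose kernel on cycles is exactly {c | c in the Q-span of boundaries},   *)
(* i.e. the torsion-saturation of B_1.                                      *)
Definition Hamb := 'rV[rat]_ncell1.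
Definition hcls (c : chain) : Hamb := chainQ c *m cokermx B2.
Definition inH (h : Hamb) : Prop := exists c : chain, is_cycle c /\ hcls c = h.

(* Z[H] (inside the group ring Z[Hamb]); mon h is the group element h *)
Definition ZH := grpalg Hamb.
Definition mon (h : Hamb) : ZH := << h >>.

(* f =. g  : equality in Z[H] up to a unit +-h, h in H *)
Definition doteq (x y : ZH) : Prop :=
  exists (s : bool) (h : Hamb), inH h /\ x = (-1) ^+ s * mon h * y.

(* Model of the universal free abelian cover X~: its vertices are the     *)
(* pairs (v, h), h in H, the deck transformation k in H acts by           *)
(* (v, h) |-> (v, h + k), and the lift of the 1-cell s starting at (c1src s, h)*)
(* ends at (c1tgt s, h + theta s), where theta : cell1 -> H is any         *)
(* assignment whose linear extension to integral cycles is the class map. *)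
Variable theta : cell1 -> Hamb.
Definition cover_cocycle : Prop :=
  (forall s, inH (theta s)) /\
  (forall c : chain, is_cycle c -> \sum_(s : cell1) theta s *~ c s = hcls c).

(* displacement of the lift of an edge path of G *)
Definition thsum (p : seq oedge) : Hamb :=
  \sum_(x <- p) (if x.2 then theta (inl x.1) else - theta (inl x.1)).

(* (v,h) and (w,h') lie in the same component of the preimage of G in X~ *)
Definition Gconn (v : V) (h : Hamb) (w : V) (h' : Hamb) : Prop :=
  exists p, gpath v p w /\ h' = h + thsum p.

(* chosen lifts v~ = (v, a v), all in one component G~_0 of the preimage of G *)
Variable a : V -> Hamb.
Definition lifts_ok : Prop :=
  (forall v, inH (a v)) /\ (forall v w, Gconn v (a v) w (a w)).
Definition inG0 (w : V) (h : Hamb) : Prop := exists v, Gconn v (a v) w h.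

(* f~ : G~_0 -> G~_0 lifting f, on vertices: f~(v,h) = (fV v, ftilde v h); *)
(* compatibility along edges (the lift of e from (src e,h) is mapped to the *)
(* lift of the path fE e starting at f~(src e, h)).                          *)
Variable ftilde : V -> Hamb -> Hamb.
Definition lift_ok : Prop :=
  (forall v h, inG0 v h -> inG0 (fV v) (ftilde v h)) /\
  (forall e h, inG0 (src e) h ->
     ftilde (tgt e) (h + theta (inl e)) = ftilde (src e) h + thsum (fE e)).

(* z : f~(x~) is the endpoint of the lift, starting at z x~, of the vertical arc *)
Variable z : Hamb.
Definition z_ok : Prop :=
  inH z /\ forall v h, inG0 v h -> ftilde v h = h + z + theta (inr v).

(* P~ : matrix of f~ on 0-chains in the basis of chosen lifts;              *)
(* f~(v~) = k . (fV v)~ with k = ftilde v (a v) - a (fV v) in K.            *)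
Definition Pt : 'M[ZH]_#|{: V}| :=
  \matrix_(i, j) (if enum_val j == fV (enum_val i)
                  then mon (ftilde (enum_val i) (a (enum_val i)) - a (enum_val j))
                  else 0).

(* components of the union of the vertical edges and their cycles *)
Definition vrel : rel V := fun x y => (fV x == y) || (fV y == x).
Definition vcomps : {set {set V}} := [set [set w | connect vrel v w] | v : V].
Definition periodic (v : V) : bool := fconnect fV (fV v) v.
(* the 1-chain of the embedded directed cycle of the component C *)
Definition cyc_chain (C : {set V}) : chain :=
  \sum_(v in C | periodic v) delta (inr v).

End MappingTorus.

(* Conjugating by the diagonal matrix of the chosen lifts turns z^-1 P~ into
   the weighted matrix M of the vertex map fV, the weight of v being the class
   of its vertical edge.  For the weighted matrix of any self-map f, det (1 - M)
   factors over the components of the functional graph of f as the product of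
   (1 - product of the weights along its cycle): a column operation contracts
   an edge v -> f v into the edges entering v, multiplying their weights, and
   once every non-fixed point has weight 0 the matrix is diagonal.  By the
   cocycle property of the classes, the product of the vertical weights along
   the cycle of a component is its homology class c_i. *)

From HB Require Import structures.
From mathcomp Require Import all_boot all_algebra finmap.
From mathcomp Require Import monalg.
Import GRing.Theory.
Set Implicit Arguments. Unset Strict Implicit. Unset Printing Implicit Defensive.
Local Open Scope ring_scope.

Section Periodic.
Variables (T : finType) (f : T -> T).

Lemma periodicP x : reflect (exists n, iter n.+1 f x = x) (periodic f x).
Proof.
apply: (iffP idP) => [/iter_findex fx | [n fx]].
  by exists (findex f (f x) x); rewrite iterSr.
by rewrite /periodic -{2}fx iterSr; apply: fconnect_iter.
Qed.

Lemma periodic_iter n x : periodic f x -> periodic f (iter n f x).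
Proof.
case/periodicP=> m fx; apply/periodicP; exists m.
by rewrite -iterD addnC iterD fx.
Qed.

Lemma periodic_f x : periodic f x -> periodic f (f x).
Proof. exact: (periodic_iter 1). Qed.

Lemma periodic_inj : {in periodic f &, injective f}.
Proof.
move=> x y /periodicP[m xm] /periodicP[n yn] fxy.
have xE : x = iter m f (f x) by rewrite -iterSr xm.
have yE : y = iter n f (f x) by rewrite fxy -iterSr yn.
have fx_m : iter m.+1 f (f x) = f x by rewrite -iterSr iterS xm.
have fx_n : iter n.+1 f (f x) = f x by rewrite fxy -iterSr iterS yn.
by rewrite xE yE -{1}fx_n -iterD addnS -addSn addnC iterD fx_m.
Qed.

Lemma periodic_preimage v : periodic f v ->
  exists2 n, periodic f (iter n f v) & f (iter n f v) = v.
Proof.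
move=> pv; case/periodicP: (pv) => n vn.
by exists n; [exact: periodic_iter | rewrite -iterS].
Qed.

Lemma exists_periodic_iter x : exists n, periodic f (iter n f x).
Proof.
have /trajectP[i lt_i xi] := looping_order f x.
exists i; apply/periodicP; exists (order f x - i).-1.
by rewrite prednK ?subn_gt0 // -iterD subnK ?xi // ltnW.
Qed.

Lemma periodic_iter_reach m n x y : periodic f y ->
  iter m f x = iter n f y -> exists k, iter k f x = y.
Proof.
case/periodicP=> p yp xy; exists (p.+1 * n.+1 - n + m)%N.
have yp_k k : iter (p.+1 * k) f y = y.
  by elim: k => [|k IHk]; rewrite ?muln0 // mulnS iterD IHk yp.
rewrite iterD xy -iterD subnK ?yp_k //.
by rewrite mulSn (leq_trans (leqnSn n)) // leq_addr.
Qed.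

End Periodic.

Section Determinants.
Variable R : comNzRingType.

Lemma det_addcol n (A : 'M[R]_n) j1 j2 c : j1 != j2 ->
  \det (\matrix_(i, j) (A i j + (if j == j2 then c * A i j1 else 0))) = \det A.
Proof.
move=> nj; rewrite -det_tr -[RHS]det_tr.
set X := (X in \det X = _).
have j2_lift i : (lift j2 i == j2) = false by apply/negbTE; rewrite eq_sym neq_lift.
pose C : 'M[R]_n := \matrix_(i, j) (if i == j2 then A^T j1 j else A^T i j).
rewrite (determinant_multilinear (A:=X) (B:=A^T) (C:=C) (i0:=j2) (b:=1) (c:=c)).
- rewrite (determinant_alternate (A:=C) (i1:=j1) (i2:=j2)) // ?mulr0 ?addr0 ?mul1r //.
  by move=> k; rewrite !mxE eqxx (negbTE nj).
- by apply/rowP=> k; rewrite !mxE eqxx mul1r.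
- by apply/matrixP=> i k; rewrite /X !mxE j2_lift addr0.
- by apply/matrixP=> i k; rewrite /C /X !mxE j2_lift addr0.
Qed.

Lemma det_unit_row_eq n (X Y : 'M[R]_n) i0 :
  (forall j, X i0 j = (j == i0)%:R) -> (forall j, Y i0 j = (j == i0)%:R) ->
  (forall i j, i != i0 -> j != i0 -> X i j = Y i j) -> \det X = \det Y.
Proof.
move=> X_i0 Y_i0 XY.
rewrite (expand_det_row X i0) (expand_det_row Y i0).
rewrite (bigD1 i0) //= [in RHS](bigD1 i0) //= !big1 ?addr0.
- rewrite X_i0 Y_i0 eqxx !mul1r /cofactor; congr (_ * \det _).
  by apply/matrixP=> i j; rewrite !mxE XY // eq_sym neq_lift.
- by move=> j nj; rewrite Y_i0 (negbTE nj) mul0r.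
- by move=> j nj; rewrite X_i0 (negbTE nj) mul0r.
Qed.

Lemma det_diag_conj n (d d' : 'rV[R]_n) (X : 'M[R]_n) :
  (forall i, d 0 i * d' 0 i = 1) -> \det (diag_mx d *m X *m diag_mx d') = \det X.
Proof.
by move=> dd'; rewrite !det_mulmx !det_diag mulrAC -big_split /= big1 ?mul1r.
Qed.

End Determinants.

Section FunMx.
Variables (R : comNzRingType) (T : finType).
Implicit Types (f : T -> T) (w : T -> R).

Definition fun_mx f w : 'M[R]_#|{: T}| :=
  \matrix_(i, j) (if enum_val j == f (enum_val i) then w (enum_val i) else 0).

Definition contract f v i := if f i == v then f v else f i.
Definition contract_weight f w v i :=
  if i == v then 0 else if f i == v then w i * w v else w i.

Lemma eq_enum_rank (j : 'I_#|{: T}|) x : (j == enum_rank x) = (enum_val j == x).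
Proof. by apply/eqP/eqP => [->|<-]; rewrite ?enum_rankK ?enum_valK. Qed.

(* Adding [w v] times column [v] to column [f v] clears row [v] off the
   diagonal, and then column [v] no longer matters. *)
Lemma det_contract f w v : f v != v ->
  \det (1%:M - fun_mx f w) = \det (1%:M - fun_mx (contract f v) (contract_weight f w v)).
Proof.
move=> nfv.
have nvfv : enum_rank v != enum_rank (f v) by rewrite eq_enum_rank enum_rankK eq_sym.
rewrite -(det_addcol (1%:M - fun_mx f w) (w v) nvfv).
apply: (det_unit_row_eq (i0 := enum_rank v)).
- move=> j; rewrite !mxE !eq_enum_rank !enum_rankK eqxx.
  rewrite [enum_rank v == _]eq_sym eq_enum_rank [v == f v]eq_sym (negbTE nfv).
  case: eqP => [->|_]; first by rewrite eq_sym (negbTE nfv) subr0 addr0.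
  by case: eqP => _; rewrite ?subr0 ?addr0 // mulr1 subrK.
- move=> j; rewrite !mxE /contract_weight !eq_enum_rank enum_rankK eqxx if_same subr0.
  by rewrite eq_sym eq_enum_rank.
- move=> i j; rewrite !eq_enum_rank => ni nj; rewrite !mxE !eq_enum_rank enum_rankK.
  rewrite -(inj_eq enum_val_inj) /contract /contract_weight (negbTE ni).
  set x := enum_val i; set y := enum_val j.
  rewrite [v == f x]eq_sym; case: (eqVneq (f x) v) => [fxv|fxv].
    rewrite fxv (negbTE nj) subr0 mulr0n sub0r.
    by case: ifP => _; rewrite ?addr0 ?subr0 // mulrN mulrC.
  by rewrite mulr0n subr0 mulr0 if_same addr0.
Qed.

Lemma fun_mx_diag f w : (forall i, f i != i -> w i = 0) ->
  1%:M - fun_mx f w = diag_mx (\row_i (1 - w (enum_val i))).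
Proof.
move=> w_fixed; apply/matrixP => i j; rewrite !mxE.
case: (eqVneq i j) => [<-|nij]; first by rewrite eq_sym; case: eqP => // /eqP/w_fixed ->.
rewrite mulr0n mulr0n sub0r; case: eqP => [fij|_]; last by rewrite oppr0.
by rewrite w_fixed ?oppr0 // -fij; apply: contra nij => /eqP/enum_val_inj ->.
Qed.

Lemma det_fun_mx_conj f w (d d' : T -> R) : (forall x, d x * d' x = 1) ->
  \det (1%:M - fun_mx f (fun x => d x * w x * d' (f x))) = \det (1%:M - fun_mx f w).
Proof.
move=> dd'.
rewrite -(@det_diag_conj _ _ (\row_i d (enum_val i)) (\row_i d' (enum_val i))
                         (1%:M - fun_mx f w)); last by move=> i; rewrite !mxE.
congr (\det _); apply/matrixP => i j.
rewrite mul_mx_diag mul_diag_mx !mxE mulrBr mulrBl; congr (_ - _).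
  by case: eqP => [<-|_]; rewrite ?mulr1n ?mulr1 ?dd' ?mulr0n ?mulr0 ?mul0r.
by case: eqP => [->|_]; rewrite ?mulr0 ?mul0r.
Qed.

End FunMx.

Section Contract.
Variables (T : finType) (f : T -> T) (v : T).
Hypothesis nfv : f v != v.
Let skip x := if x == v then f v else x.

Lemma contractE x : contract f v x = skip (f x).
Proof. by []. Qed.

Lemma contract_neq x : contract f v x != v.
Proof. by rewrite contractE /skip; case: ifP => // /negbT. Qed.

Lemma iter_contract_skip n x :
  exists n', iter n' (contract f v) (skip x) = skip (iter n f x).
Proof.
elim: n => [|n [n' IHn]]; first by exists 0%N.
case: (eqVneq (iter n f x) v) => [xn_v|xn_nv].
  by exists n'; rewrite IHn iterS xn_v /skip eqxx (negbTE nfv).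
by exists n'.+1; rewrite iterS IHn contractE /skip (negbTE xn_nv).
Qed.

Lemma iter_contract_ge n' x :
  exists2 n, (n' <= n)%N & iter n' (contract f v) x = iter n f x.
Proof.
elim: n' => [|n' [n le_n' IHn']]; first by exists 0%N.
rewrite iterS IHn' contractE /skip; case: eqP => [xn_v|_].
  by exists n.+2; [exact: leqW | rewrite !iterS -xn_v].
by exists n.+1; [exact: le_n' | rewrite iterS].
Qed.

Lemma periodic_contract x : periodic (contract f v) x = periodic f x && (x != v).
Proof.
apply/idP/andP => [/periodicP[p xp] | [/periodicP[p xp] nxv]].
  split; last first.
    apply/eqP=> xv; have := contract_neq (iter p (contract f v) x).
    by rewrite -iterS xp xv eqxx.
  have [n le_pn xn] := iter_contract_ge p.+1 x.
  by apply/periodicP; exists n.-1; rewrite prednK -?xn // (leq_trans _ le_pn).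
have [n' xn'] := iter_contract_skip p (f x).
apply/periodicP; exists n'.
by rewrite iterSr contractE xn' -iterSr xp /skip (negbTE nxv).
Qed.

End Contract.

Section FunMxDet.
Variables (R : comNzRingType) (T : finType).
Implicit Types (f : T -> T) (w : T -> R) (P : {set {set T}}).

Definition f_closed f P := forall B x, B \in P -> x \in B -> f x \in B.
Definition unicyclic f P := forall B x y, B \in P -> x \in B -> y \in B ->
  periodic f x -> periodic f y -> exists n, iter n f x = y.
Definition moving_support f w := [set i | (f i != i) && (w i != 0)].

Lemma f_closed_iter f P B x n : f_closed f P -> B \in P -> x \in B -> iter n f x \in B.
Proof. by move=> fP PB xB; elim: n => //= n IHn; apply: fP. Qed.

Lemma contract_closed f v P : f_closed f P -> f_closed (contract f v) P.
Proof.
move=> fP B x PB xB; rewrite /contract; case: ifP => [/eqP <-|_]; by do ?apply: (fP B).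
Qed.

Lemma contract_unicyclic f v P : f v != v -> unicyclic f P -> unicyclic (contract f v) P.
Proof.
move=> nfv fP B x y PB xB yB.
rewrite !periodic_contract // => /andP[px nxv] /andP[py nyv].
have [k xk] := fP B x y PB xB yB px py.
have [k' xk'] := iter_contract_skip nfv k x.
by exists k'; move: xk'; rewrite xk (negbTE nxv) (negbTE nyv).
Qed.

Lemma moving_support_contract f w v : v \in moving_support f w ->
  (#|moving_support (contract f v) (contract_weight f w v)| < #|moving_support f w|)%N.
Proof.
move=> mv; rewrite [X in (_ < X)%N](cardsD1 v) mv add1n ltnS subset_leq_card //.
apply/subsetP => i; rewrite !inE /contract /contract_weight.
have [-> | niv] /= := eqVneq i v; first by rewrite eqxx andbF.
case: ifP => [/eqP fiv|_] //; move: mv; rewrite inE => /andP[nfv _].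
case/andP=> _ nw; rewrite fiv eq_sym niv /=.
by apply: contraNneq nw => ->; rewrite mul0r.
Qed.

Lemma prod_periodic_contract f w v P B : f v != v -> f_closed f P -> B \in P ->
  \prod_(x in B | periodic (contract f v) x) contract_weight f w v x =
  \prod_(x in B | periodic f x) w x.
Proof.
move=> nfv fP PB; under eq_bigl => x do rewrite periodic_contract //.
have [/andP[vB pv] | vBp] := boolP ((v \in B) && periodic f v).
- have [n pu fu] := periodic_preimage pv; set u := iter n f v in pu fu.
  have uB : u \in B by apply: (f_closed_iter _ fP).
  have nuv : u != v by apply: contraNneq nfv => uv; rewrite -{1}uv fu.
  rewrite [RHS](bigD1 v) /=; last by rewrite vB pv.
  rewrite (bigD1 u) /=; last by rewrite uB pu nuv.
  rewrite [X in _ = _ * X](bigD1 u) /=; last by rewrite uB pu nuv.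
  rewrite /contract_weight (negbTE nuv) fu eqxx mulrCA !mulrA; congr (_ * _).
  apply: eq_big => [x|x /andP[/andP[xB /andP[px nxv]] nxu]]; first by rewrite !andbA.
  rewrite (negbTE nxv); case: eqP => // fxv.
  by rewrite (periodic_inj px pu (etrans fxv (esym fu))) eqxx in nxu.
- apply: eq_big => [x|x /andP[xB /andP[px nxv]]].
    have [xB|] //= := boolP (x \in B); have [px|] //= := boolP (periodic f x).
    by apply: contraNneq vBp => <-; rewrite xB.
  rewrite /contract_weight (negbTE nxv); case: eqP => // fxv.
  by case/negP: vBp; rewrite -fxv (fP B) // periodic_f.
Qed.

Lemma prod_unicyclic_block f w P B : f_closed f P -> unicyclic f P -> B \in P ->
  B != set0 -> (forall i, f i != i -> w i = 0) ->
  \prod_(x in B) (1 - w x) = 1 - \prod_(x in B | periodic f x) w x.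
Proof.
move=> fP fuP PB /set0Pn[b bB] w_fixed.
have [k pq] := exists_periodic_iter f b; set q := iter k f b in pq.
have qB : q \in B by apply: (f_closed_iter _ fP).
have fixed_periodic x : f x = x -> periodic f x.
  by move=> fx; apply/periodicP; exists 0%N.
have [fq | nfq] := eqVneq (f q) q.
- rewrite [X in _ = 1 - X](big_pred1 q); last first.
    move=> x /=; apply/andP/eqP => [[xB px]|->] //.
    by have [m <-] := fuP B q x PB qB xB pq px; rewrite iter_fix.
  rewrite (bigD1 q) //= big1 ?mulr1 // => x /andP[xB nxq].
  rewrite w_fixed ?subr0 //; apply: contraNneq nxq => fx.
  by have [m <-] := fuP B q x PB qB xB pq (fixed_periodic x fx); rewrite iter_fix.
- rewrite [X in _ = 1 - X](bigD1 q) /=; last by rewrite qB pq.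
  rewrite (w_fixed q nfq) mul0r subr0 big1 // => x xB.
  rewrite w_fixed ?subr0 //; apply: contra_neq nfq => fx.
  by have [m <-] := fuP B x q PB xB qB (fixed_periodic x fx) pq; rewrite !iter_fix.
Qed.

Lemma det_fun_mx f w P : partition P [set: T] -> f_closed f P -> unicyclic f P ->
  \det (1%:M - fun_mx f w) = \prod_(B in P) (1 - \prod_(x in B | periodic f x) w x).
Proof.
move=> partP; have [n] := ubnP #|moving_support f w|.
elim: n f w => // n IHn f w lt_n fP fuP.
have [supp0 | [v mv]] := set_0Vmem (moving_support f w); last first.
  move: (mv); rewrite inE => /andP[nfv _].
  rewrite (det_contract w nfv) IHn.
  - by apply: eq_bigr => B PB; rewrite (prod_periodic_contract _ nfv fP PB).
  - exact: leq_trans (moving_support_contract mv) _.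
  - exact: contract_closed.
  - exact: contract_unicyclic.
have w_fixed i : f i != i -> w i = 0.
  move=> ni; apply/eqP; apply: contraT => nwi.
  by rewrite -(in_set0 i) -supp0 inE ni.
case/and3P: partP => /eqP coverP trivP P0.
rewrite fun_mx_diag // det_diag.
under eq_bigr => i _ do rewrite mxE.
rewrite -(big_enum_val (fun x => 1 - w x)).
transitivity (\prod_(x in cover P) (1 - w x)).
  by apply: eq_bigl => x; rewrite coverP !inE.
rewrite big_trivIset //; apply: eq_bigr => B PB.
apply: (prod_unicyclic_block fP fuP PB _ w_fixed).
by apply: contraNneq P0 => <-.
Qed.

End FunMxDet.

Section VerticalComponents.
Variables (V : finType) (f : V -> V).

Lemma connect_vrel_sym : connect_sym (vrel f).
Proof. by apply: sym_connect_sym => x y; rewrite /vrel orbC. Qed.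

Lemma vcomps_partition : partition (vcomps f) [set: V].
Proof.
have -> : vcomps f = equivalence_partition (connect (vrel f)) [set: V].
  apply/setP => B; apply/imsetP/imsetP => -[v _ ->]; exists v => //;
    by apply/setP => y; rewrite !inE.
apply: equivalence_partitionP => x y t _ _ _; split; first exact: connect0.
by move=> xy; apply/idP/idP; apply: connect_trans; rewrite // connect_vrel_sym.
Qed.

Lemma vcomps_closed : f_closed f (vcomps f).
Proof.
move=> B x /imsetP[v _ ->]; rewrite !inE => vx.
by apply: connect_trans vx (connect1 _); rewrite /vrel eqxx.
Qed.

Lemma vrel_path_meet p x : path (vrel f) x p ->
  exists m n, iter m f x = iter n f (last x p).
Proof.
elim: p x => [|y p IHp] x /=; first by exists 0%N, 0%N.
case/andP => /orP[/eqP fx | /eqP fy] /IHp[m [n xy]].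
  by exists m.+1, n; rewrite iterSr fx.
by exists m, n.+1; rewrite -fy -iterSr iterS xy -iterS.
Qed.

Lemma vcomps_unicyclic : unicyclic f (vcomps f).
Proof.
move=> B x y /imsetP[v _ ->]; rewrite !inE => vx vy _ py.
have /connectP[p xp yE] : connect (vrel f) x y.
  by apply: connect_trans vy; rewrite connect_vrel_sym.
have [m [n]] := vrel_path_meet xp; rewrite -yE; exact: periodic_iter_reach.
Qed.

Lemma periodic_vcomp_image C : C \in vcomps f ->
  f @: [set x in C | periodic f x] = [set x in C | periodic f x].
Proof.
move=> vC; apply/eqP; rewrite eqEcard card_in_imset ?leqnn ?andbT.
  apply/subsetP => _ /imsetP[x + ->]; rewrite !inE => /andP[xC px].
  by rewrite (vcomps_closed vC xC) periodic_f.
by move=> x y; rewrite !inE => /andP[_ px] /andP[_ py]; apply: periodic_inj.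
Qed.

End VerticalComponents.

Section CycleChain.
Variables (V E : finType) (src tgt : E -> V) (f : V -> V).

Lemma sum_cyc_chain (M : zmodType) (C : {set V}) (F : cell1 V E -> M) :
  \sum_s F s *~ cyc_chain E f C s = \sum_(x in C | periodic f x) F (inr x).
Proof.
under eq_bigr => s _ do rewrite /cyc_chain sum_ffunE mulrz_sumr.
rewrite exchange_big /=; apply: eq_bigr => x _.
rewrite (bigD1 (inr x)) //= ffunE eqxx mulr1z big1 ?addr0 // => s nsx.
by rewrite ffunE (negbTE nsx) mulr0z.
Qed.

Lemma cyc_chain_is_cycle C : C \in vcomps f -> is_cycle src tgt f (cyc_chain E f C).
Proof.
move=> vC v; rewrite /bd1.
under eq_bigr => s _ do rewrite mulrC -mulrzz.
rewrite sum_cyc_chain /= sumrB.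
have sumS (F : V -> int) :
    \sum_(x in C | periodic f x) F x = \sum_(x in [set x in C | periodic f x]) F x.
  by apply: eq_bigl => x; rewrite inE.
rewrite !sumS -[in X in _ - X](periodic_vcomp_image vC) big_imset ?subrr //.
by move=> x y; rewrite !inE => /andP[_ px] /andP[_ py]; apply: periodic_inj.
Qed.

End CycleChain.

Section GroupRing.
Variables V E : finType.
Implicit Types x y : Hamb V E.

Lemma monD x y : mon (x + y) = mon x * mon y.
Proof. by have := gmulUU 1 1 x y; rewrite mulr1. Qed.

Lemma mon0 : mon (0 : Hamb V E) = 1.
Proof. by []. Qed.

Lemma monN x : mon x * mon (- x) = 1.
Proof. by rewrite -monD subrr. Qed.

Lemma mon_sum (I : finType) (P : pred I) (F : I -> Hamb V E) :
  mon (\sum_(i | P i) F i) = \prod_(i | P i) mon (F i).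
Proof. exact: (big_morph _ monD mon0). Qed.

Lemma inH0 (src tgt : E -> V) (fV : V -> V) (fE : E -> seq (oedge E)) :
  inH src tgt fV fE 0.
Proof.
exists 0; split; first by move=> v; rewrite /bd1 big1 // => s _; rewrite ffunE mul0r.
rewrite /hcls (_ : chainQ _ = 0) ?mul0mx //.
by apply/rowP => i; rewrite !mxE ffunE.
Qed.

End GroupRing.

Lemma det_Pt_conj (V E : finType) (fV : V -> V) (theta : cell1 V E -> Hamb V E)
    (a : V -> Hamb V E) (ftilde : V -> Hamb V E -> Hamb V E) (z : Hamb V E) :
  (forall v, ftilde v (a v) = a v + z + theta (inr v)) ->
  \det (1%:M - mon (- z) *: Pt fV a ftilde) =
  \det (1%:M - fun_mx fV (fun v => mon (theta (inr v)))).
Proof.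
move=> ftilde_a.
have -> : mon (- z) *: Pt fV a ftilde =
    fun_mx fV (fun v => mon (a v) * mon (theta (inr v)) * mon (- a (fV v))).
  apply/matrixP => i j; rewrite !mxE; case: eqP => [->|_]; last by rewrite mulr0.
  rewrite -!monD ftilde_a; congr mon.
  by rewrite [a _ + z]addrC -!addrA addKr.
apply: (@det_fun_mx_conj _ _ fV _ (fun v => mon (a v)) (fun v => mon (- a v))) => v.
exact: monN.
Qed.

Unset Implicit Arguments.
Theorem lemma4p1
  (V E : finType) (src tgt : E -> V)
  (HG : graph_connected src tgt)
  (fV : V -> V) (fE : E -> seq (oedge E))
  (Hf : is_graph_map src tgt fV fE)
  (theta : cell1 V E -> Hamb V E)
  (Htheta : cover_cocycle src tgt fV fE theta)
  (a : V -> Hamb V E)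
  (Ha : lifts_ok src tgt fV fE theta a)
  (ftilde : V -> Hamb V E -> Hamb V E)
  (Hft : lift_ok src tgt fV fE theta a ftilde)
  (z : Hamb V E)
  (Hz : z_ok src tgt fV fE theta a ftilde z) :
  doteq src tgt fV fE
    (\det (1%:M - mon (- z) *: Pt fV a ftilde))
    (\prod_(C in vcomps fV) (1 - mon (hcls src tgt fE (cyc_chain E fV C)))).
Proof.
case: Htheta => _ hclsE; case: Ha => _ a_conn; case: Hz => _ ftildeE.
have ftilde_a v : ftilde v (a v) = a v + z + theta (inr v).
  by apply: ftildeE; exists v; apply: a_conn.
rewrite (det_Pt_conj fV ftilde_a).
rewrite (det_fun_mx _ (vcomps_partition fV) (@vcomps_closed _ fV)
                     (@vcomps_unicyclic _ fV)).
exists false, 0; split; first exact: inH0.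
rewrite expr0 mon0 !mul1r; apply: eq_bigr => C vC.
by rewrite -(hclsE _ (cyc_chain_is_cycle src tgt vC)) sum_cyc_chain mon_sum.
Qed.
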